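(* In the polarized setting below, assume $w\ge2$ and keep the operators $D^0(t)$, $D^{\pm}_p(t)$ ($t\in H^0$) defined below. For $(z,\mathbf x,\mathbf y)\in\mathbf C\times\mathbf C^{w-1}\times\mathbf C^{w-1}$, $\mathbf x=(x_0,\dots,x_{w-2})$, $\mathbf y=(y_0,\dots,y_{w-2})$, define for $t\in H^0$ the endomorphism of $V_w$ $$D_{(z,\mathbf x,\mathbf y)}(t)=z\,D^0(t)+\sum_{p=0}^{w-2}x_p\,D^+_p(t)\pi_p+\sum_{p=0}^{w-2}y_p\,D^-_{p+1}(t)\pi_{p+1},$$ where $\pi_p:V_w\to H^p$ is the projection. If $x_py_p=z^2$ for all $p=0,\dots,w-2$, then $D_{(z,\mathbf x,\mathbf y)}(t)D_{(z,\mathbf x,\mathbf y)}(t')=D_{(z,\mathbf x,\mathbf y)}(t')D_{(z,\mathbf x,\mathbf y)}(t)$ for all $t,t'\in H^0$; i.e. the morphism $D_{(z,\mathbf x,\mathbf y)}:V_w\to(H^0)^*\otimes V_w$ satisfies $D_{(z,\mathbf x,\mathbf y)}\wedge D_{(z,\mathbf x,\mathbf y)}=0$ (it is a Higgs morphism). Thus the affine variety $\hat H=\{(z,\mathbf x,\mathbf y): x_py_p=z^2,\ p=0,\dots,w-2\}$ parametrizes such Higgs morphisms.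
   Context: Polarized setting. Let $X$ be a smooth complex projective variety of dimension $n\ge2$ with canonical divisor $K_X$, $\mathcal E$ a rank $n$ holomorphic vector bundle with $\mathcal O_X(L)=\det\mathcal E$ and $H^i(\mathcal O_X(-L))=0$ for $i\le n-1$. Let $e\in H^0(\mathcal E)$ be a section whose zero scheme $Z=Z_e$ is a finite set of $d$ distinct reduced points. Put $A=H^0(\mathcal O_Z)$ and $E_Z=\mathrm{Ext}^{n-1}(\mathcal I_Z(L),\mathcal O_X)$, viewed via Serre duality $E_Z\cong H^1(\mathcal I_Z(L+K_X))^*$ and dualizing the surjection $H^0(\mathcal O_Z(L+K_X))\to H^1(\mathcal I_Z(L+K_X))$ as a subspace of $H^0(\mathcal O_Z(L+K_X))^*\cong H^0(\omega_Z\otimes\mathcal O_X(-L-K_X))$, sections of an invertible sheaf on $Z$. An element $\alpha\in E_Z$ is regular if $f\mapsto f\alpha$ is an isomorphism $A\to H^0(\mathcal O_Z(L+K_X))^*$ (i.e. $\alpha$ vanishes at no point of $Z$). For regular $\alpha$ put $V_1=\{\beta/\alpha:\beta\in E_Z\}\subset A$ (it contains $1$), let $V_k$ be the span of all products of $k$ elements of $V_1$ (so $V_1\subset V_2\subset\cdots$), $V_0=0$, and let $w\ge1$ be the least integer with $V_k=V_w$ for all $k\ge w$. Let $q(f,g)=\sum_{z\in Z}f(z)g(z)$ be the trace form on $A$; $\alpha$ is polarizing if it is regular and $q|_{V_k}$ is non-degenerate for all $k\ge1$. For polarizing $\alpha$ define $H^p=V_p^{\perp}\cap V_{p+1}$ for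 $0\le p\le w-1$ and $H^w=V_w^{\perp}$, orthogonal complements taken in $A$ with respect to $q$. Then $A=\bigoplus_{p=0}^wH^p$, $H^0=V_1$ and $V_w=\bigoplus_{p=0}^{w-1}H^p$. For $t\in H^0$, multiplication by $t$ preserves $V_w$ and maps $H^p$ into $H^{p-1}\oplus H^p\oplus H^{p+1}$; $D^-_p(t):H^p\to H^{p-1}$, $D^0_p(t):H^p\to H^p$, $D^+_p(t):H^p\to H^{p+1}$ denote the components of multiplication by $t$ restricted to $H^p$, and $D^0(t)=\sum_{p=0}^{w-1}D^0_p(t)\pi_p$. *)

From HB Require Import structures.
From mathcomp Require Import all_boot all_order all_algebra.
From mathcomp Require Import complex.
From mathcomp Require Import Rstruct.
Set Implicit Arguments. Unset Strict Implicit. Unset Printing Implicit Defensive.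
Import GRing.Theory.
Local Open Scope ring_scope.

Definition Cplx : fieldType := Rdefinitions.R[i].

Section Polarized.
Variables (K : fieldType) (Z : finType).

(* A = H^0(O_Z) = functions on the finite reduced set Z, as a K-vector space *)
Definition fnZ := {ffun Z -> K^o}.

Definition fmul (f g : fnZ) : fnZ := [ffun z => (f z : K) * g z].
Definition fone : fnZ := [ffun => (1 : K)].
Definition fdiv (f g : fnZ) : fnZ := [ffun z => (f z : K) / g z].

Definition trq (f g : fnZ) : K := \sum_(z : Z) (f z : K) * g z.

Definition regular (alpha : fnZ) : Prop := forall z : Z, (alpha z : K) != 0.

Definition V1of (E : {vspace fnZ}) (alpha : fnZ) : {vspace fnZ} :=
  <<[seq fdiv b alpha | b <- vbasis E]>>%VS.

Definition prodv (U W : {vspace fnZ}) : {vspace fnZ} :=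
  <<[seq fmul u v | u <- vbasis U, v <- vbasis W]>>%VS.

Fixpoint Vk (V1 : {vspace fnZ}) (k : nat) : {vspace fnZ} :=
  match k with
  | 0 => 0%VS
  | 1 => V1
  | k'.+1 => prodv (Vk V1 k') V1
  end.

Definition stable_from (V1 : {vspace fnZ}) (w : nat) : Prop :=
  forall k, (w <= k)%N -> Vk V1 k = Vk V1 w.
Definition is_w (V1 : {vspace fnZ}) (w : nat) : Prop :=
  [/\ (1 <= w)%N, stable_from V1 w &
      forall w', (1 <= w')%N -> stable_from V1 w' -> (w <= w')%N].

Definition nondeg (U : {vspace fnZ}) : Prop :=
  forall u, u \in U -> (forall v, v \in U -> trq u v = 0) -> u = 0.

Definition polarizing (E : {vspace fnZ}) (alpha : fnZ) : Prop :=
  regular alpha /\ forall k, (1 <= k)%N -> nondeg (Vk (V1of E alpha) k).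

Definition orthv (U : {vspace fnZ}) : {vspace fnZ} :=
  lker (linfun (fun f : fnZ =>
     [ffun i : 'I_(\dim U) => (trq f (tnth (vbasis U) i) : K^o)])).

Definition Hp (V1 : {vspace fnZ}) (w p : nat) : {vspace fnZ} :=
  if (p < w)%N then (orthv (Vk V1 p) :&: Vk V1 p.+1)%VS
  else orthv (Vk V1 w).

Definition pip (V1 : {vspace fnZ}) (w p : nat) : fnZ -> fnZ :=
  daddv_pi (Hp V1 w p) (\sum_(q < w.+1 | q != p :> nat) Hp V1 w q)%VS.

(* pi_a (t * pi_b f) : the component H^b -> H^a of multiplication by t *)
Definition Dcomp (V1 : {vspace fnZ}) (w : nat) (t : fnZ) (a b : nat)
  (f : fnZ) : fnZ := pip V1 w a (fmul t (pip V1 w b f)).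

Definition Dzxy (V1 : {vspace fnZ}) (w : nat) (zz : K)
  (x y : 'I_w.-1 -> K) (t f : fnZ) : fnZ :=
  zz *: (\sum_(p < w) Dcomp V1 w t p p f)
  + \sum_(p < w.-1) x p *: Dcomp V1 w t p.+1 p f
  + \sum_(p < w.-1) y p *: Dcomp V1 w t p p.+1 f.

End Polarized.
Arguments Dzxy [K Z] V1 w zz x y t f.
Arguments Dcomp [K Z] V1 w t a b f.

(* The H^p are pairwise orthogonal for the trace form and span A, so the pi_p
   are the q-orthogonal projections.  Multiplication by t in H^0 = V_1 raises
   the filtration degree by one and is q-self-adjoint, so t H^b is q-orthogonal
   to H^a whenever |a - b| >= 2: pi_a t pi_b = 0 off the band |a - b| <= 1.
   Writing D(t) = sum_(a,b) c_(a,b) pi_a t pi_b, the block pi_a D(t) D(t') pi_d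
   is sum_b c_(a,b) c_(b,d) pi_a t pi_b t' pi_d, and on the band the relations
   x_p y_p = z^2 make c_(a,b) c_(b,d) independent of b.  The sum over b then
   collapses to a multiple of pi_a t t' pi_d, which is symmetric in t and t'. *)

From HB Require Import structures.
From mathcomp Require Import all_boot all_order all_algebra.
From mathcomp Require Import complex.
From mathcomp Require Import Rstruct.
From mathcomp Require Import zify ring.
Set Implicit Arguments.
Unset Strict Implicit.
Unset Printing Implicit Defensive.
Import GRing.Theory.
Local Open Scope ring_scope.

Section FunctionAlgebra.
Variables (K : fieldType) (Z : finType).
Local Notation fn := (fnZ K Z).

Lemma fmulC (f g : fn) : fmul f g = fmul g f.
Proof. by apply/ffunP=> z; rewrite !ffunE mulrC. Qed.

Lemma fmulA (f g h : fn) : fmul f (fmul g h) = fmul (fmul f g) h.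
Proof. by apply/ffunP=> z; rewrite !ffunE mulrA. Qed.

Lemma fmul1 (f : fn) : fmul (fone K Z) f = f.
Proof. by apply/ffunP=> z; rewrite !ffunE mul1r. Qed.

Lemma fmul_is_linear (t : fn) : linear (fmul t).
Proof. by move=> a f g; apply/ffunP=> z; rewrite !ffunE mulrDr mulrCA. Qed.
HB.instance Definition _ (t : fn) :=
  GRing.isLinear.Build K fn fn *:%R (fmul t) (fmul_is_linear t).

Lemma trqC (f g : fn) : trq f g = trq g f.
Proof. by apply: eq_bigr => z _; rewrite mulrC. Qed.

Lemma trq_is_linear (f : fn) : linear (trq f : fn -> K^o).
Proof.
move=> a g h; rewrite /trq [in RHS]/GRing.scale /= mulr_sumr -big_split.
by apply: eq_bigr => z _; rewrite !ffunE mulrDr mulrCA.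
Qed.
HB.instance Definition _ (f : fn) :=
  GRing.isLinear.Build K fn K^o *:%R (trq f) (trq_is_linear f).

Lemma trq_fmul (t f g : fn) : trq (fmul t f) g = trq f (fmul t g).
Proof. by apply: eq_bigr => z _; rewrite !ffunE mulrCA mulrA. Qed.

Lemma trq_nondeg (f : fn) : (forall g, trq f g = 0) -> f = 0.
Proof.
move=> f_orth; apply/ffunP=> z; rewrite ffunE.
have := f_orth [ffun z' => (z' == z)%:R].
rewrite /trq (bigD1 z) //= big1 => [|z' /negPf nz]; rewrite !ffunE ?eqxx ?nz.
  by rewrite mulr1 addr0.
by rewrite mulr0.
Qed.

Definition orth_coords (U : {vspace fn}) (f : fn) : {ffun 'I_(\dim U) -> K^o} :=
  [ffun i => trq f (tnth (vbasis U) i)].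

Lemma orth_coords_is_linear U : linear (orth_coords U).
Proof. by move=> a f g; apply/ffunP=> i; rewrite !ffunE !(trqC _ (tnth _ i)) linearP. Qed.
HB.instance Definition _ U :=
  GRing.isLinear.Build K fn _ *:%R (orth_coords U) (orth_coords_is_linear U).

Lemma orthvP (U : {vspace fn}) (f : fn) :
  reflect (forall u, u \in U -> trq f u = 0) (f \in orthv U).
Proof.
rewrite -[orthv U]/(lker (linfun (orth_coords U))) memv_ker lfunE.
apply: (iffP eqP) => [f_orth u uU | f_orth].
  rewrite (coord_vbasis uU) linear_sum big1 // => i _; rewrite linearZ /=.
  by move/ffunP/(_ i): f_orth; rewrite !ffunE (tnth_nth 0) => ->; rewrite scaler0.
by apply/ffunP=> i; rewrite !ffunE f_orth // vbasis_mem // mem_tnth.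
Qed.

Lemma nondeg_orth_decomp (U : {vspace fn}) f :
  nondeg U -> exists2 a, a \in U & f - a \in orthv U.
Proof.
move=> ndU; pose F := linfun (orth_coords U).
have kerF : (U :&: lker F = 0)%VS.
  apply/eqP; rewrite -subv0; apply/subvP=> h /memv_capP[hU hker].
  by rewrite memv0; apply/eqP/ndU => //; apply/orthvP.
have imF : (F @: U)%VS = fullv.
  by apply/eqP; rewrite eqEdim subvf (limg_dim_eq kerF) dimvf /dim /= card_ord muln1.
have /memv_imgP[a aU Fa] : F f \in (F @: U)%VS by rewrite imF memvf.
by exists a => //; rewrite -[orthv U]/(lker F) memv_ker linearB /= Fa subrr.
Qed.

Section OrthogonalDecomposition.
Variables (n : nat) (H : nat -> {vspace fn}).
Hypothesis H_orthogonal : forall p q h g, p != q -> (p <= n)%N -> (q <= n)%N ->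
  h \in H p -> g \in H q -> trq h g = 0.
Hypothesis H_span : forall v, v \in (\sum_(q < n.+1) H q)%VS.

Definition orth_proj p : 'End(fn) :=
  daddv_pi (H p) (\sum_(q < n.+1 | q != p :> nat) H q).

Lemma orth_all_eq0 h :
  (forall q g, (q <= n)%N -> g \in H q -> trq h g = 0) -> h = 0.
Proof.
move=> h_orth; apply: trq_nondeg => g.
have [gs gsH ->] := memv_sumP (H_span g).
by rewrite linear_sum big1 // => q _; apply: h_orth (gsH q isT); rewrite -ltnS.
Qed.

Lemma trq_sumv_compl p h g : (p <= n)%N ->
  h \in (\sum_(q < n.+1 | q != p :> nat) H q)%VS -> g \in H p -> trq h g = 0.
Proof.
move=> pn /memv_sumP[hs hsH ->] gH; rewrite trqC linear_sum big1 // => q qp.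
by rewrite /= trqC (H_orthogonal qp _ pn (hsH q qp) gH) // -ltnS.
Qed.

Lemma orth_proj_cap0 p : (p <= n)%N ->
  (H p :&: \sum_(q < n.+1 | q != p :> nat) H q = 0)%VS.
Proof.
move=> pn; apply/eqP; rewrite -subv0; apply/subvP=> h /memv_capP[hH hS].
rewrite memv0; apply/eqP/orth_all_eq0 => q g qn.
have [<- gH|qp] := eqVneq p q; first exact: trq_sumv_compl hS gH.
exact: H_orthogonal qp pn qn hH.
Qed.

Lemma orth_proj_Hp p q h : (p <= n)%N -> (q <= n)%N -> h \in H q ->
  orth_proj p h = if p == q then h else 0.
Proof.
move=> pn; have [<- _ hH|pq qn hH] := eqVneq p q.
  exact: daddv_pi_id (orth_proj_cap0 pn) hH.
have hS : h \in (\sum_(i < n.+1 | i != p :> nat) H i)%VS.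
  rewrite -ltnS in qn; apply: (subvP (sumv_sup (Ordinal qn) _ _)) hH => //=.
  by rewrite eq_sym.
have := daddv_pi_add (orth_proj_cap0 pn) (subvP (addvSr _ _) _ hS).
rewrite (daddv_pi_id _ hS) => [/(canRL (addrK _))|]; first by rewrite subrr.
by rewrite capvC orth_proj_cap0.
Qed.

Lemma orth_proj_decomp v : v = \sum_(i < n.+1) orth_proj i v.
Proof.
have [hs hsH vE] := memv_sumP (H_span v).
rewrite {1}vE; apply: eq_bigr => i _; rewrite vE linear_sum (bigD1 i) //=.
rewrite (orth_proj_Hp (leq_ord i) (leq_ord i) (hsH i isT)) eqxx big1 ?addr0 // => j ji.
rewrite (orth_proj_Hp (leq_ord i) (leq_ord j) (hsH j isT)).
by rewrite eq_sym (inj_eq val_inj) (negPf ji).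
Qed.

Lemma trq_orth_proj p v g : (p <= n)%N -> g \in H p -> trq (orth_proj p v) g = trq v g.
Proof.
move=> pn gH; have pn1 : (p < n.+1)%N by rewrite ltnS.
rewrite [in RHS](orth_proj_decomp v) [in RHS]trqC linear_sum (bigD1 (Ordinal pn1)) //=.
rewrite big1 ?addr0 1?trqC // => j jp.
by rewrite /= trqC (H_orthogonal _ (leq_ord j) pn (memv_pi _ _ _) gH).
Qed.

Lemma orth_proj_eq0 p v : (p <= n)%N ->
  (forall g, g \in H p -> trq v g = 0) -> orth_proj p v = 0.
Proof.
move=> pn v_orth; apply: orth_all_eq0 => q g qn.
have [<- gH|pq] := eqVneq p q; first by rewrite trq_orth_proj // v_orth.
exact: H_orthogonal pq pn qn (memv_pi _ _ _).
Qed.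

End OrthogonalDecomposition.

Lemma prodv_mem (U W : {vspace fn}) u v : u \in U -> v \in W -> fmul u v \in prodv U W.
Proof.
move=> uU vW; rewrite (coord_vbasis uU) fmulC linear_sum rpred_sum // => i _.
rewrite /= linearZ /= fmulC (coord_vbasis vW) linear_sum rpredZ // rpred_sum // => j _.
by rewrite /= linearZ rpredZ // memv_span // allpairs_f // mem_nth // size_tuple.
Qed.

Lemma fone_V1of (E : {vspace fn}) (alpha : fn) :
  alpha \in E -> regular alpha -> fone K Z \in V1of E alpha.
Proof.
move=> alphaE alpha_reg; pose u := fdiv (fone K Z) alpha.
have divE f : fdiv f alpha = linfun (fmul u) f.
  by rewrite lfunE; apply/ffunP=> z; rewrite !ffunE mul1r mulrC.
have -> : fone K Z = fdiv alpha alpha by apply/ffunP=> z; rewrite !ffunE divff.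
rewrite /V1of (eq_map divE) -limg_span (span_basis (vbasisP E)) divE.
exact: memv_img.
Qed.

Section Filtration.
Variable V1 : {vspace fn}.
Hypothesis fone_V1 : fone K Z \in V1.

Lemma Vk_mul t f k : t \in V1 -> f \in Vk V1 k -> fmul t f \in Vk V1 k.+1.
Proof.
case: k => [|k] tV fV; last by rewrite fmulC; apply: prodv_mem.
by move: fV; rewrite memv0 => /eqP ->; rewrite linear0 rpred0.
Qed.

Lemma Vk_mono m k : (m <= k)%N -> (Vk V1 m <= Vk V1 k)%VS.
Proof.
elim: k => [|k IHk]; first by rewrite leqn0 => /eqP ->.
rewrite leq_eqVlt ltnS => /predU1P[-> //|/IHk mk].
by apply: subv_trans mk _; apply/subvP => f fV; rewrite -(fmul1 f) Vk_mul.
Qed.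

End Filtration.
End FunctionAlgebra.

Section OrdinalExtension.
Variables (R : ringType) (V : lmodType R) (n : nat).

Definition ord_ext (u : 'I_n -> R) (p : nat) : R := oapp u 0 (insub p).

Lemma ord_extE u (i : 'I_n) : ord_ext u i = u i.
Proof. by rewrite /ord_ext valK. Qed.

Lemma ord_ext_out u p : (n <= p)%N -> ord_ext u p = 0.
Proof. by move=> np; rewrite /ord_ext insubF // ltnNge np. Qed.

Lemma sum_ord_ext u (F : nat -> V) :
  \sum_(p < n) u p *: F p = \sum_(p < n.+1) ord_ext u p *: F p.
Proof.
rewrite big_ord_recr /= ord_ext_out // scale0r addr0.
by apply: eq_bigr => i _; rewrite ord_extE.
Qed.

Lemma sum_ord_delta (F : nat -> V) i :
  \sum_(p < n) (if p == i :> nat then F p else 0) = if (i < n)%N then F i else 0.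
Proof. by rewrite -big_mkcond big_ord1_eq. Qed.

End OrdinalExtension.

HB.instance Definition _ (K : fieldType) (Z : finType) (V1 : {vspace fnZ K Z}) w p :=
  GRing.Linear.copy (pip V1 w p) (orth_proj w (Hp V1 w) p).

Section Polarized.
Variables (K : fieldType) (Z : finType) (E : {vspace fnZ K Z}) (alpha : fnZ K Z) (w : nat).
Hypotheses (alphaE : alpha \in E) (alpha_pol : polarizing E alpha).
Hypotheses (w_gt0 : (0 < w)%N) (w_stable : stable_from (V1of E alpha) w).
Local Notation fn := (fnZ K Z).
Local Notation V1 := (V1of E alpha).
Local Notation V k := (Vk V1 k).
Local Notation H p := (Hp V1 w p).
Local Notation pi p := (pip V1 w p).

Let fone_V1 : fone K Z \in V1.
Proof. by case: alpha_pol => alpha_reg _; apply: fone_V1of. Qed.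

Lemma Vk_nondeg k : nondeg (V k).
Proof.
case: k => [|k]; last by case: alpha_pol => _; apply.
by move=> u; rewrite memv0 => /eqP.
Qed.

Lemma Vk_sub_Vw k : (V k <= V w)%VS.
Proof.
by case: (leqP k w) => [/(Vk_mono fone_V1) //|/ltnW wk]; rewrite w_stable.
Qed.

Lemma Hp_sub_orth p : (p <= w)%N -> (H p <= orthv (V p))%VS.
Proof. by rewrite /Hp leq_eqVlt => /predU1P[->|->]; rewrite ?ltnn ?capvSl. Qed.

Lemma Hp_sub_Vk p : (p < w)%N -> (H p <= V p.+1)%VS.
Proof. by rewrite /Hp => ->; apply: capvSr. Qed.

Lemma Hp_sub_Vw p : (p < w)%N -> (H p <= V w)%VS.
Proof. by move=> pw; apply: subv_trans (Hp_sub_Vk pw) (Vk_sub_Vw _). Qed.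

Lemma Hp_orthogonal p q h g : p != q -> (p <= w)%N -> (q <= w)%N ->
  h \in H p -> g \in H q -> trq h g = 0.
Proof.
wlog pq : p q h g / (p < q)%N => [hwlog|].
  case: (ltngtP p q) => // [pq|qp] _ pw qw hH gH.
    by apply: (hwlog p q); rewrite // ltn_eqF.
  by rewrite trqC; apply: (hwlog q p); rewrite // ltn_eqF.
move=> _ _ qw hH /(subvP (Hp_sub_orth qw))/orthvP g_orth; rewrite trqC g_orth //.
by apply: (subvP (Vk_mono fone_V1 pq)); apply: (subvP (Hp_sub_Vk (leq_trans pq qw))).
Qed.

Lemma Vk_sub_sumHp k : (k <= w)%N -> (V k <= \sum_(q < w.+1 | (q < k)%N) H q)%VS.
Proof.
elim: k => [|k IHk] kw; first by rewrite sub0v.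
apply/subvP => v vV; have [a aV va] := nondeg_orth_decomp v (@Vk_nondeg k).
have vaH : v - a \in H k.
  by rewrite /Hp kw memv_cap va rpredB // (subvP (Vk_mono fone_V1 (leqnSn k))).
rewrite (bigD1 (Ordinal (leqW kw : (k < w.+1)%N))) //= -(subrK a v) memv_add //.
rewrite (eq_bigl (fun q : 'I_w.+1 => (q < k)%N)) ?(subvP (IHk (ltnW kw))) // => q.
by rewrite ltnS leq_eqVlt -val_eqE; case: ltngtP.
Qed.

Lemma Hp_span v : v \in (\sum_(q < w.+1) H q)%VS.
Proof.
have [a aV va] := nondeg_orth_decomp v (@Vk_nondeg w).
have vaH : v - a \in H w by rewrite /Hp ltnn.
rewrite -(subrK a v) (bigD1 ord_max) //= memv_add //.
rewrite (eq_bigl (fun q : 'I_w.+1 => (q < w)%N)) ?(subvP (Vk_sub_sumHp (leqnn w))) // => q.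
by rewrite -val_eqE /= ltn_neqAle -ltnS ltn_ord andbT.
Qed.

Lemma pip_mem p v : pi p v \in H p.
Proof. exact: memv_pi. Qed.
Arguments pip_mem : clear implicits.

Lemma pip_Hp p q h : (p <= w)%N -> (q <= w)%N -> h \in H q ->
  pi p h = if p == q then h else 0.
Proof. move=> pw qw hH; exact: (orth_proj_Hp Hp_orthogonal Hp_span pw qw hH). Qed.

Lemma pip_decomp_Vw v : v \in V w -> v = \sum_(i < w) pi i v.
Proof.
move=> vV; transitivity (\sum_(i < w.+1) pi i v).
  exact: orth_proj_decomp Hp_orthogonal Hp_span v.
rewrite big_ord_recr /= (_ : pi w v = 0) ?addr0 //.
apply: (orth_proj_eq0 Hp_orthogonal Hp_span (leqnn w)) => g.
by move/(subvP (Hp_sub_orth (leqnn w)))/orthvP => g_orth; rewrite trqC g_orth.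
Qed.

Lemma fmul_Hp_Vw t b h : t \in V1 -> (b < w)%N -> h \in H b -> fmul t h \in V w.
Proof.
move=> tV bw hH; apply: (subvP (Vk_sub_Vw b.+2)).
exact: Vk_mul tV (subvP (Hp_sub_Vk bw) _ hH).
Qed.

Lemma pip_fmul_far t a b h : t \in V1 -> (a <= w)%N -> (b < w)%N -> h \in H b ->
  (b.+1 < a)%N || (a.+1 < b)%N -> pi a (fmul t h) = 0.
Proof.
move=> tV aw bw hH far; apply: (orth_proj_eq0 Hp_orthogonal Hp_span aw) => g gH.
case/orP: far => [ba|ab].
  rewrite trqC; move/(subvP (Hp_sub_orth aw))/orthvP: gH; apply.
  by apply: (subvP (Vk_mono fone_V1 ba)); apply: Vk_mul tV (subvP (Hp_sub_Vk bw) _ hH).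
rewrite trq_fmul; move/(subvP (Hp_sub_orth (ltnW bw)))/orthvP: hH; apply.
have aw' : (a < w)%N by apply: ltn_trans (ltnW ab) bw.
by apply: (subvP (Vk_mono fone_V1 ab)); apply: Vk_mul tV (subvP (Hp_sub_Vk aw') _ gH).
Qed.

Section Higgs.
Variables (zz : K) (x y : 'I_w.-1 -> K).
Hypothesis xy_eq : forall p, x p * y p = zz ^+ 2.
Local Notation xx := (ord_ext x).
Local Notation yy := (ord_ext y).
Local Notation T t a b g := (Dcomp V1 w t a b g).
Local Notation D t g := (Dzxy V1 w zz x y t g).

Lemma ord_ext_xy p : (p.+1 < w)%N -> xx p * yy p = zz ^+ 2.
Proof.
by rewrite -ltn_predRL => pw; rewrite -[p]/(nat_of_ord (Ordinal pw)) !ord_extE.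
Qed.

Definition Dcoef a b : K :=
  (if a == b then zz else 0) + (if a == b.+1 then xx b else 0)
  + (if b == a.+1 then yy a else 0).

Definition DDcoef a d : K :=
  if a == d then zz ^+ 2 else if a == d.+1 then zz * xx d
  else if d == a.+1 then zz * yy a else if a == d.+2 then xx d.+1 * xx d
  else if d == a.+2 then yy a * yy a.+1 else 0.

(* The product does not depend on the middle index [b]: this is where
   [x_p y_p = z^2] enters. *)
Lemma DcoefM a b d : (a < w)%N -> (b < w)%N -> (d < w)%N ->
  (a <= b.+1)%N -> (b <= a.+1)%N -> (b <= d.+1)%N -> (d <= b.+1)%N ->
  Dcoef a b * Dcoef b d = DDcoef a d.
Proof.
move=> aw bw dw ab ba bd db; rewrite /Dcoef /DDcoef.
repeat (case: eqP => ?; try (exfalso; lia)); subst;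
  rewrite ?(addr0, add0r, mul0r, mulr0); try ring.
all: first [by rewrite ord_ext_xy | by rewrite mulrC ord_ext_xy].
Qed.

Lemma Dzxy_sum t g : D t g =
  \sum_(p < w) (zz *: T t p p g + xx p *: T t p.+1 p g + yy p *: T t p p.+1 g).
Proof.
rewrite /Dzxy (sum_ord_ext x (fun p => T t p.+1 p g)).
rewrite (sum_ord_ext y (fun p => T t p p.+1 g)).
by rewrite (prednK w_gt0) scaler_sumr -!big_split.
Qed.

Lemma pip_Dcomp t a p q g : (a <= w)%N -> (p <= w)%N ->
  pi a (T t p q g) = if a == p then T t a q g else 0.
Proof. by move=> aw pw; rewrite (pip_Hp aw pw (pip_mem _ _)); case: eqP => // ->. Qed.

Lemma pip_Dzxy t g a : (a < w)%N -> pi a (D t g) = \sum_(b < w) Dcoef a b *: T t a b g.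
Proof.
move=> aw; rewrite Dzxy_sum linear_sum.
transitivity (\sum_(p < w) (((if a == p then zz else 0) + (if a == p.+1 then xx p else 0))
    *: T t a p g + (if p == a :> nat then yy a *: T t a a.+1 g else 0))).
  apply: eq_bigr => p _; have pw := ltn_ord p.
  rewrite !linearD !linearZ /= !pip_Dcomp ?(ltnW aw) ?(ltnW pw) //.
  rewrite scalerDl [p == a :> nat]eq_sym.
  by case: eqP => [<-|_]; case: eqP => _; rewrite ?scaler0 ?scale0r ?addr0 ?add0r.
rewrite big_split (sum_ord_delta w (fun=> yy a *: T t a a.+1 g)) aw /=.
under [RHS]eq_bigr do rewrite /Dcoef scalerDl.
rewrite big_split /=; congr (_ + _).
rewrite (eq_bigr (fun b : 'I_w => if b == a.+1 :> nat then yy a *: T t a b g else 0)).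
  rewrite (sum_ord_delta w (fun b => yy a *: T t a b g)); case: ltnP => // wa.
  by rewrite ord_ext_out ?scale0r // -ltnS prednK.
by move=> b _; case: eqP; rewrite ?scale0r.
Qed.

Lemma DcoefM_pip t t' f a b d : t \in V1 -> t' \in V1 ->
  (a < w)%N -> (b < w)%N -> (d < w)%N ->
  (Dcoef a b * Dcoef b d) *: pi a (fmul t (pi b (fmul t' (pi d f))))
  = DDcoef a d *: pi a (fmul t (pi b (fmul t' (pi d f)))).
Proof.
move=> tV t'V aw bw dw.
have [far_bd|] := boolP ((d.+1 < b) || (b.+1 < d))%N.
  by rewrite (pip_fmul_far t'V (ltnW bw) dw (pip_mem d f) far_bd) !linear0.
have [far_ab|] := boolP ((b.+1 < a) || (a.+1 < b))%N.
  by rewrite (pip_fmul_far tV (ltnW aw) bw (pip_mem b _) far_ab) !scaler0.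
by rewrite !negb_or -!leqNgt => /andP[ba ab] /andP[bd db]; rewrite DcoefM.
Qed.

Lemma pip_Dzxy2 t t' f a : t \in V1 -> t' \in V1 -> (a < w)%N ->
  pi a (D t (D t' f)) = \sum_(d < w) DDcoef a d *: pi a (fmul t (fmul t' (pi d f))).
Proof.
move=> tV t'V aw; rewrite pip_Dzxy //.
under eq_bigr => b _.
  rewrite /Dcomp pip_Dzxy // linear_sum linear_sum scaler_sumr.
  under eq_bigr => d _ do rewrite !linearZ /= scalerA mulrC /Dcomp DcoefM_pip //.
  over.
rewrite exchange_big /=; apply: eq_bigr => d _.
rewrite -scaler_sumr -linear_sum -linear_sum -pip_decomp_Vw //.
exact: fmul_Hp_Vw t'V (ltn_ord d) (pip_mem d f).
Qed.

Lemma Dzxy_Vw t g : D t g \in V w.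
Proof.
have TVw a b : (a < w)%N -> T t a b g \in V w.
  by move=> aw; apply: (subvP (Hp_sub_Vw aw)); apply: pip_mem.
rewrite /Dzxy; apply: rpredD; first apply: rpredD.
- by rewrite rpredZ // rpred_sum // => p _; apply: TVw.
- by apply: rpred_sum => p _; rewrite rpredZ // TVw // -ltn_predRL.
- by apply: rpred_sum => p _; rewrite rpredZ // TVw // (leq_trans (ltn_ord p)) ?leq_pred.
Qed.

Lemma Dzxy_comm t t' f : t \in V1 -> t' \in V1 -> D t (D t' f) = D t' (D t f).
Proof.
move=> tV t'V; rewrite [LHS]pip_decomp_Vw ?Dzxy_Vw // [RHS]pip_decomp_Vw ?Dzxy_Vw //.
apply: eq_bigr => a _; rewrite !pip_Dzxy2 //; apply: eq_bigr => d _.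
by rewrite fmulA (fmulC t t') -fmulA.
Qed.

End Higgs.
End Polarized.

Unset Implicit Arguments.

Theorem mainTheorem9 (Z : finType) (E : {vspace fnZ Cplx Z}) (alpha : fnZ Cplx Z)
  (w : nat) :
  alpha \in E ->
  polarizing E alpha ->
  is_w (V1of E alpha) w ->
  (2 <= w)%N ->
  forall (zz : Cplx) (x y : 'I_w.-1 -> Cplx),
  (forall p : 'I_w.-1, x p * y p = zz ^+ 2) ->
  forall t t' : fnZ Cplx Z,
  t \in Hp (V1of E alpha) w 0 -> t' \in Hp (V1of E alpha) w 0 ->
  forall f : fnZ Cplx Z, f \in Vk (V1of E alpha) w ->
  Dzxy (V1of E alpha) w zz x y t (Dzxy (V1of E alpha) w zz x y t' f)
  = Dzxy (V1of E alpha) w zz x y t' (Dzxy (V1of E alpha) w zz x y t f).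
Proof.
move=> alphaE alpha_pol [w_gt0 w_stable _] _ zz x y xy_eq t t' tH t'H f _.
have H0_sub_V1 s : s \in Hp (V1of E alpha) w 0 -> s \in V1of E alpha.
  by rewrite /Hp w_gt0 => /memv_capP[].
exact: (Dzxy_comm alphaE alpha_pol w_gt0 w_stable xy_eq f
  (H0_sub_V1 t tH) (H0_sub_V1 t' t'H)).
Qed.
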